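(* The Burau representation $\rho_3$ specialized at $t_0\in \mathbb{C}^{*}$ is faithful if and only if $-t_0 \notin \Sigma_*$.
   Context: The braid group $\mathcal{B}_3$ is generated by $\sigma_1,\sigma_2$ with the relation $\sigma_1\sigma_2\sigma_1=\sigma_2\sigma_1\sigma_2$. The (reduced) Burau representation $\rho_3:\mathcal{B}_3\to \mathrm{GL}(2,\mathbb{Z}[t,t^{-1}])$ is defined by $\sigma_1\mapsto\begin{pmatrix}-t&1\\ 0&1\end{pmatrix}$, $\sigma_2\mapsto\begin{pmatrix}1&0\\ t&-t\end{pmatrix}$. Its specialization $\rho_3^{t_0}:\mathcal{B}_3\to\mathrm{GL}(2,\mathbb{C})$ is given by the same matrices with $t$ replaced by a nonzero complex number $t_0\in\mathbb{C}^*=\mathbb{C}\setminus\{0\}$. $q$-rationals: let $R_q=\begin{pmatrix}q&1\\ 0&1\end{pmatrix}$, $L_q=\begin{pmatrix}1&0\\ 1&q^{-1}\end{pmatrix}$, with $R=R_q|_{q=1}$, $L=L_q|_{q=1}$ the standard generators of $\mathrm{SL}(2,\mathbb{Z})$. For $M=\begin{pmatrix}r&v\\ s&u\end{pmatrix}=R^{a_1}L^{a_2}\cdots R^{a_{2m-1}}L^{a_{2m}}\in\mathrm{SL}(2,\mathbb{Z})$, let $M_q=R_q^{a_1}L_q^{a_2}\cdots R_q^{a_{2m-1}}L_q^{a_{2m}}=\begin{pmatrix}\mathcal{R}&\mathcal{V}\\ \mathcal{S}&\mathcal{U}\end{pmatrix}$, with Laurent polynomial entries in $q$. The $q$-deformation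 of the rational $\frac{r}{s}$ (first column of $M$) is $\left[\frac{r}{s}\right]_q=\frac{\mathcal{R}(q)}{\mathcal{S}(q)}$ (independent of choices). The singular set $\Sigma\subset\mathbb{C}^*$ is the union of the complex poles of all $q$-rationals $\left[\frac{r}{s}\right]_q$, $\frac{r}{s}\in\mathbb{Q}$, and the extended singular set is $\Sigma_*=\Sigma\cup\{1\}$. *)

From HB Require Import structures.
From mathcomp Require Import all_boot all_order all_algebra.
From mathcomp Require Import complex.
From mathcomp Require Import reals.
Set Implicit Arguments. Unset Strict Implicit. Unset Printing Implicit Defensive.
Import Order.TTheory GRing.Theory Num.Theory.
Local Open Scope ring_scope.

(* a letter: (generator index, sign);  (false, b) is sigma_1, (true, b) is
   sigma_2, and b = true means the inverse generator *)
Definition letter := (bool * bool)%type.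
Definition bword := seq letter.

Definition letter_inv (x : letter) : letter := (x.1, ~~ x.2).

Inductive braid_eq : bword -> bword -> Prop :=
| beq_refl w : braid_eq w w
| beq_sym w v : braid_eq w v -> braid_eq v w
| beq_trans u v w : braid_eq u v -> braid_eq v w -> braid_eq u w
| beq_cat u u' v v' : braid_eq u u' -> braid_eq v v' -> braid_eq (u ++ v) (u' ++ v')
| beq_free x : braid_eq [:: x; letter_inv x] [::]
| beq_braid : braid_eq [:: (false, false); (true, false); (false, false)]
                       [:: (true, false); (false, false); (true, false)].

Section Burau.
Variable C : fieldType.

Definition burau_s1 (t : C) : 'M[C]_2 :=
  \matrix_(i < 2, j < 2)
    (if (i == 0 :> nat) && (j == 0 :> nat) then - t
     else if (i == 0 :> nat) then 1
     else if (j == 0 :> nat) then 0 else 1).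

Definition burau_s2 (t : C) : 'M[C]_2 :=
  \matrix_(i < 2, j < 2)
    (if (i == 0 :> nat) && (j == 0 :> nat) then 1
     else if (i == 0 :> nat) then 0
     else if (j == 0 :> nat) then t else - t).

Definition burau_letter (t : C) (x : letter) : 'M[C]_2 :=
  let A := if x.1 then burau_s2 t else burau_s1 t in
  if x.2 then invmx A else A.

Definition burau_word (t : C) (w : bword) : 'M[C]_2 :=
  foldr (fun x M => burau_letter t x *m M) 1%:M w.

Definition burau_faithful (t0 : C) : Prop :=
  forall w : bword, burau_word t0 w = 1%:M -> braid_eq w [::].

End Burau.

(* Laurent polynomials in q are viewed inside the field of rational    *)
(* functions {fraction {poly C}}, with q = 'X.                         *)

Section QRat.
Variable C : fieldType.

Definition RF := {fraction {poly C}}.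
Local Notation "x %:F" := (@FracField.tofrac {poly C} x).
Definition qF : RF := ('X : {poly C})%:F.

Definition mx2 (a b c d : RF) : 'M[RF]_2 :=
  \matrix_(i < 2, j < 2)
    (if (i == 0 :> nat) && (j == 0 :> nat) then a
     else if (i == 0 :> nat) then b
     else if (j == 0 :> nat) then c else d).

Definition Rq : 'M[RF]_2 := mx2 qF 1 0 1.
Definition Lq : 'M[RF]_2 := mx2 1 0 1 qF^-1.

Definition mxpowz (A : 'M[RF]_2) (a : int) : 'M[RF]_2 :=
  match a with
  | Posz n => A ^+ n
  | Negz n => invmx (A ^+ n.+1)
  end.

(* M_q = R_q^{a1} L_q^{a2} ... R_q^{a_{2m-1}} L_q^{a_{2m}} for the exponent
   sequence [:: (a1, a2); ...; (a_{2m-1}, a_{2m})] *)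
Definition Mq (s : seq (int * int)) : 'M[RF]_2 :=
  foldr (fun p M => mxpowz Rq p.1 *m mxpowz Lq p.2 *m M) 1%:M s.

(* the classical matrix M = M_q at q = 1, with integer entries *)
Definition Rz : 'M[int]_2 := \matrix_(i < 2, j < 2)
    (if (i == 0 :> nat) && (j == 0 :> nat) then 1
     else if (i == 0 :> nat) then 1
     else if (j == 0 :> nat) then 0 else 1).
Definition Lz : 'M[int]_2 := \matrix_(i < 2, j < 2)
    (if (i == 0 :> nat) && (j == 0 :> nat) then 1
     else if (i == 0 :> nat) then 0
     else if (j == 0 :> nat) then 1 else 1).
Definition RzInv : 'M[int]_2 := \matrix_(i < 2, j < 2)
    (if (i == 0 :> nat) && (j == 0 :> nat) then 1
     else if (i == 0 :> nat) then -1
     else if (j == 0 :> nat) then 0 else 1).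
Definition LzInv : 'M[int]_2 := \matrix_(i < 2, j < 2)
    (if (i == 0 :> nat) && (j == 0 :> nat) then 1
     else if (i == 0 :> nat) then 0
     else if (j == 0 :> nat) then -1 else 1).
Definition zpow (A Ainv : 'M[int]_2) (a : int) : 'M[int]_2 :=
  match a with
  | Posz n => A ^+ n
  | Negz n => Ainv ^+ n.+1
  end.
Definition Mz (s : seq (int * int)) : 'M[int]_2 :=
  foldr (fun p M => zpow Rz RzInv p.1 *m zpow Lz LzInv p.2 *m M) 1%:M s.

Definition is_pole (f : RF) (q0 : C) : Prop :=
  ~ exists p d : {poly C}, d.[q0] != 0 /\ f = p%:F / d%:F.

(* Sigma: the union of the poles in C^* of all q-rationals [r/s]_q = R(q)/S(q),
   where (r, s) is the first column of M = R^{a1}L^{a2}...  with s <> 0 *)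
Definition singular_set (q0 : C) : Prop :=
  q0 != 0 /\
  exists s : seq (int * int),
    Mz s 1 0 != 0 /\ is_pole (Mq s 0 0 / Mq s 1 0) q0.

Definition ext_singular_set (q0 : C) : Prop := singular_set q0 \/ q0 = 1.

End QRat.

From HB Require Import structures.
From mathcomp Require Import all_boot all_order all_algebra.
From mathcomp Require Import complex.
From mathcomp Require Import reals.
From mathcomp Require Import ring zify.
From Stdlib Require Import Setoid Morphisms.
Set Implicit Arguments. Unset Strict Implicit. Unset Printing Implicit Defensive.
Import Order.TTheory GRing.Theory Num.Theory.
Local Open Scope ring_scope.

(* Put q = -t.  Up to powers of q, rho_3 at t = -q is a representation P_q of
   B_3 over Z[q]; P_1 is the classical map B_3 -> SL(2, Z), and the q-rational
   of a word u is P_q(u)_00 / P_q(u)_10.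

   If -t0 is a pole of the q-rational of u, then rho(u)_10 = 0 at t0, so
   g = u s1 u^-1 and s1 both act as affine maps x |-> -t0 x + b.  A word in g
   and s1 that is trivial in this affine group is then in the kernel, although
   its image in SL(2, Z) has lower left entry 2 c^4 + 4 c^6 <> 0, where
   c = P_1(u)_10.  If -t0 = 1, then Z^2 is in the kernel, Z = (s1 s2 s1)^2.

   Conversely, B_3 / <Z> is the free product of <X> = Z/2 and <Y> = Z/3, with
   X = s1 s2 s1 and Y = s1 s2, and no nontrivial reduced word in X, Y maps to
   +-1 in SL(2, Z).  If w is in the kernel, write Z^m w = Z^k r with r
   reduced.  Either r <> 1, and r or s2 r s2^-1 is a word u with
   P_1(u)_10 <> 0 mapping to a scalar, which makes -t0 a pole of the
   q-rational of u; or r = 1, and -t0 is a root of unity, hence 1 or a pole of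
   [1/N]_q, unless m = k and w is trivial. *)

Section Mx2.
Variable R : nzRingType.

(* The body of mx2, burau_s1 and burau_s2, which therefore fold to m2. *)
Definition m2 (a b c d : R) : 'M[R]_2 :=
  \matrix_(i < 2, j < 2)
    (if (i == 0 :> nat) && (j == 0 :> nat) then a
     else if (i == 0 :> nat) then b
     else if (j == 0 :> nat) then c else d).

Lemma m2E00 a b c d : m2 a b c d 0 0 = a. Proof. by rewrite mxE. Qed.
Lemma m2E01 a b c d : m2 a b c d 0 1 = b. Proof. by rewrite mxE. Qed.
Lemma m2E10 a b c d : m2 a b c d 1 0 = c. Proof. by rewrite mxE. Qed.
Lemma m2E11 a b c d : m2 a b c d 1 1 = d. Proof. by rewrite mxE. Qed.

Lemma ord2P (i : 'I_2) : i = 0 \/ i = 1.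
Proof. case: i => [[|[|//]] Hi]; [left|right]; exact: val_inj. Qed.

Lemma m2_eta (A : 'M[R]_2) : A = m2 (A 0 0) (A 0 1) (A 1 0) (A 1 1).
Proof.
apply/matrixP => i j; rewrite mxE.
by case: (ord2P i) => ->; case: (ord2P j) => ->.
Qed.

Lemma m2_mul a b c d a' b' c' d' :
  m2 a b c d *m m2 a' b' c' d' =
  m2 (a * a' + b * c') (a * b' + b * d') (c * a' + d * c') (c * b' + d * d').
Proof.
apply/matrixP => i j; rewrite !mxE !big_ord_recr big_ord0 /= !mxE add0r.
by case: (ord2P i) => ->; case: (ord2P j) => ->.
Qed.

Lemma m2_1 : 1%:M = m2 1 0 0 1.
Proof.
apply/matrixP => i j; rewrite !mxE.
by case: (ord2P i) => ->; case: (ord2P j) => ->.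
Qed.

Lemma m2_scale k a b c d : k *: m2 a b c d = m2 (k * a) (k * b) (k * c) (k * d).
Proof.
apply/matrixP => i j; rewrite !mxE.
by case: (ord2P i) => ->; case: (ord2P j) => ->.
Qed.

Lemma m2_inj a b c d a' b' c' d' :
  m2 a b c d = m2 a' b' c' d' -> [/\ a = a', b = b', c = c' & d = d'].
Proof.
move=> E; split.
- by rewrite -(m2E00 a b c d) E m2E00.
- by rewrite -(m2E01 a b c d) E m2E01.
- by rewrite -(m2E10 a b c d) E m2E10.
- by rewrite -(m2E11 a b c d) E m2E11.
Qed.

End Mx2.

Lemma map_m2 (R S : nzRingType) (f : R -> S) a b c d :
  map_mx f (m2 a b c d) = m2 (f a) (f b) (f c) (f d).
Proof.
apply/matrixP => i j; rewrite !mxE.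
by case: (ord2P i) => ->; case: (ord2P j) => ->.
Qed.

Lemma det_mx2 (R : comNzRingType) (A : 'M[R]_2) :
  \det A = A 0 0 * A 1 1 - A 0 1 * A 1 0.
Proof.
rewrite (expand_det_row _ 0) !big_ord_recr big_ord0 /= add0r /cofactor !det_mx11.
rewrite /= !mxE expr0 expr1 mul1r mulN1r mulrN.
by congr (A _ _ * A _ _ - A _ _ * A _ _); apply: val_inj.
Qed.

Lemma invmx_right (R : comUnitRingType) (n : nat) (A B : 'M[R]_n) :
  A *m B = 1%:M -> invmx A = B.
Proof.
move=> AB; have [uA _] := mulmx1_unit AB.
by rewrite -[invmx A]mulmx1 -AB mulmxA mulVmx // mul1mx.
Qed.

Lemma invmxX (F : fieldType) (n : nat) (A : 'M[F]_n.+1) m :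
  invmx (A ^+ m) = invmx A ^+ m.
Proof. exact: (esym (exprVn A m)). Qed.

Lemma invmx_upper (F : fieldType) (a b d : F) : a != 0 -> d != 0 ->
  invmx (m2 a b 0 d) = m2 a^-1 (- b / (a * d)) 0 d^-1.
Proof.
move=> a0 d0; apply: invmx_right.
rewrite m2_mul m2_1; by congr m2; field; rewrite ?a0 ?d0.
Qed.

#[global] Instance braid_eq_Equivalence : Equivalence braid_eq.
Proof. split; [exact: beq_refl | exact: beq_sym | exact: beq_trans]. Qed.

#[global] Instance cat_Proper :
  Proper (braid_eq ==> braid_eq ==> braid_eq) (@cat letter).
Proof. move=> u u' Hu v v' Hv; exact: beq_cat. Qed.

#[global] Hint Resolve beq_refl : core.

Notation s1 := (false, false).
Notation s2 := (true, false).
Notation s1i := (false, true).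
Notation s2i := (true, true).

Lemma letter_invK : involutive letter_inv.
Proof. by case=> a []. Qed.

Lemma beq_free_inv x : braid_eq [:: letter_inv x; x] [::].
Proof. by rewrite -{2}(letter_invK x); exact: beq_free. Qed.

Definition inv_word (w : bword) : bword := rev (map letter_inv w).

Lemma inv_word_cons x w : inv_word (x :: w) = inv_word w ++ [:: letter_inv x].
Proof. by rewrite /inv_word /= rev_cons cats1. Qed.

Lemma braid_eq_cat_inv w : braid_eq (w ++ inv_word w) [::].
Proof.
elim: w => [|x w IH] //=; rewrite inv_word_cons.
have -> : x :: w ++ (inv_word w ++ [:: letter_inv x]) =
          [:: x] ++ ((w ++ inv_word w) ++ [:: letter_inv x]) by rewrite catA.
rewrite IH; exact: beq_free.
Qed.

Lemma braid_eq_inv_cat w : braid_eq (inv_word w ++ w) [::].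
Proof.
elim: w => [|x w IH] //=; rewrite inv_word_cons -catA.
rewrite -[[:: letter_inv x] ++ _]/([:: letter_inv x; x] ++ w) beq_free_inv.
exact: IH.
Qed.

Lemma braid_eq_catl a w v : braid_eq (a ++ w) (a ++ v) -> braid_eq w v.
Proof.
have E u : braid_eq u (inv_word a ++ (a ++ u)).
  by rewrite catA braid_eq_inv_cat.
by move=> H; rewrite (E w) (E v) H.
Qed.

Section WordMx.
Variables (R : nzRingType) (f : letter -> 'M[R]_2).

Definition word_mx (w : bword) : 'M[R]_2 := foldr (fun x M => f x *m M) 1%:M w.

Lemma word_mx_cat u v : word_mx (u ++ v) = word_mx u *m word_mx v.
Proof. by elim: u => [|x u IH] /=; rewrite ?mul1mx // IH mulmxA. Qed.

Lemma word_mx1 x : word_mx [:: x] = f x.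
Proof. exact: mulmx1. Qed.

Lemma word_mx_nseq n x : word_mx (nseq n x) = f x ^+ n.
Proof. by elim: n => [|n IH]; rewrite ?expr0 // exprS /= IH mulmxE. Qed.

Hypothesis f_inv : forall x, f x *m f (letter_inv x) = 1%:M.
Hypothesis f_braid : f s1 *m f s2 *m f s1 = f s2 *m f s1 *m f s2.

Lemma word_mx_braid_eq u v : braid_eq u v -> word_mx u = word_mx v.
Proof.
elim=> //.
- by move=> u0 v0 w _ -> _ ->.
- by move=> u0 u' v0 v' _ E1 _ E2; rewrite !word_mx_cat E1 E2.
- by move=> x /=; rewrite mulmx1 f_inv.
- by rewrite /= !mulmx1 !mulmxA f_braid.
Qed.

Lemma word_mx_inv_word w : word_mx w *m word_mx (inv_word w) = 1%:M.
Proof. by rewrite -word_mx_cat (word_mx_braid_eq (braid_eq_cat_inv w)). Qed.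

End WordMx.

Lemma map_word_mx (R S : nzRingType) (g : {rmorphism R -> S})
    (f : letter -> 'M[R]_2) (f' : letter -> 'M[S]_2) :
  (forall x, map_mx g (f x) = f' x) ->
  forall w, map_mx g (word_mx f w) = word_mx f' w.
Proof.
by move=> gf; elim=> [|x w IH] /=; rewrite ?map_mx1 // map_mxM IH gf.
Qed.

(** * A normal form in B_3 *)

Definition wX : bword := [:: s1; s2; s1].
Definition wY : bword := [:: s1; s2].
Definition wZ : bword := wX ++ wX.
Arguments wX : simpl never.
Arguments wY : simpl never.
Arguments wZ : simpl never.

Definition Zpow (k : nat) : bword := flatten (nseq k wZ).

Lemma wZ_wYYY : braid_eq wZ (wY ++ wY ++ wY).
Proof. exact: (beq_cat (beq_refl wX) beq_braid). Qed.

Lemma wX_s1 : braid_eq (wX ++ [:: s1]) ([:: s2] ++ wX).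
Proof. exact: (beq_cat beq_braid (beq_refl [:: s1])). Qed.

Lemma wX_s2 : braid_eq (wX ++ [:: s2]) ([:: s1] ++ wX).
Proof. exact: (beq_cat (beq_refl [:: s1]) (beq_sym beq_braid)). Qed.

Lemma commute_letter_inv a x : braid_eq (a ++ [:: x]) ([:: x] ++ a) ->
  braid_eq (a ++ [:: letter_inv x]) ([:: letter_inv x] ++ a).
Proof.
move=> H.
have -> : braid_eq (a ++ [:: letter_inv x])
    ([:: letter_inv x] ++ ([:: x] ++ a) ++ [:: letter_inv x]).
  rewrite -[[:: letter_inv x] ++ _]/([:: letter_inv x; x] ++ a ++ [:: letter_inv x]).
  by rewrite beq_free_inv.
by rewrite -H -catA -[[:: x] ++ _]/[:: x; letter_inv x] beq_free cats0.
Qed.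

Lemma commute_word a : (forall x, braid_eq (a ++ [:: x]) ([:: x] ++ a)) ->
  forall w, braid_eq (a ++ w) (w ++ a).
Proof.
move=> H; elim=> [|x w IH]; first by rewrite cats0.
by rewrite -cat1s catA H -catA IH catA.
Qed.

Lemma wZ_central w : braid_eq (wZ ++ w) (w ++ wZ).
Proof.
apply: commute_word => x.
have Z_s1 : braid_eq (wZ ++ [:: s1]) ([:: s1] ++ wZ).
  by rewrite /wZ -catA wX_s1 catA wX_s2 -catA.
have Z_s2 : braid_eq (wZ ++ [:: s2]) ([:: s2] ++ wZ).
  by rewrite /wZ -catA wX_s2 catA wX_s1 -catA.
case: x => [[] []]; by [exact: (commute_letter_inv Z_s1) | exact: (commute_letter_inv Z_s2) |].
Qed.

Lemma Zpow_add k l : Zpow (k + l) = Zpow k ++ Zpow l.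
Proof. by rewrite /Zpow nseqD flatten_cat. Qed.

Lemma Zpow_central k w : braid_eq (Zpow k ++ w) (w ++ Zpow k).
Proof.
elim: k => [|k IH]; first by rewrite cats0.
by rewrite -[Zpow k.+1]/(wZ ++ Zpow k) -catA IH catA wZ_central -catA.
Qed.

(* Modulo its centre <Z>, B_3 is the free product of <X> (order 2) and <Y>
   (order 3).  [(a, [:: e_1; ...; e_n], tl) : reduced] encodes the reduced word
   X^a (Y^(1+e_1) X) ... (Y^(1+e_n) X) Y^tl of that free product, where
   [tl = None] stands for Y^0 and [Some e] for Y^(1+e). *)
Definition reduced := (bool * seq bool * option bool)%type.

Definition wYe (e : bool) : bword := if e then wY ++ wY else wY.
Definition block (e : bool) : bword := wYe e ++ wX.
Definition reduced_word (r : reduced) : bword :=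
  (if r.1.1 then wX else [::]) ++ flatten (map block r.1.2) ++
  (if r.2 is Some e then wYe e else [::]).

Definition reduced1 : reduced := (false, [::], None).

(* Left multiplication by X and by Y; the first component counts the factors
   Z = X^2 = Y^3 that are split off. *)
Definition reduced_mulX (r : reduced) : nat * reduced :=
  let: (a, bs, tl) := r in if a then (1%N, (false, bs, tl)) else (0%N, (true, bs, tl)).

Definition reduced_mulY (r : reduced) : nat * reduced :=
  match r with
  | (true, bs, tl) => (0%N, (false, false :: bs, tl))
  | (false, false :: bs, tl) => (0%N, (false, true :: bs, tl))
  | (false, true :: bs, tl) => (1%N, (true, bs, tl))
  | (false, [::], Some false) => (0%N, (false, [::], Some true))
  | (false, [::], Some true) => (1%N, (false, [::], None))
  | (false, [::], None) => (0%N, (false, [::], Some false))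
  end.

Lemma reduced_mulXP r : braid_eq (wX ++ reduced_word r)
  (Zpow (reduced_mulX r).1 ++ reduced_word (reduced_mulX r).2).
Proof. by case: r => [[[] bs] tl]; apply: beq_refl. Qed.

Lemma reduced_mulYP r : braid_eq (wY ++ reduced_word r)
  (Zpow (reduced_mulY r).1 ++ reduced_word (reduced_mulY r).2).
Proof.
have Zpow1 : Zpow 1 = wZ by exact: cats0.
have YYY w : braid_eq (wY ++ wY ++ wY ++ w) (Zpow 1 ++ w).
  by rewrite Zpow1 wZ_wYYY !catA.
case: r => [[[] [|[] bs]] [[]|]]; try apply: beq_refl.
all: by apply: beq_trans (YYY _).
Qed.

Definition nform := (nat * reduced)%type.
Definition nform_word (n : nform) : bword := Zpow n.1 ++ reduced_word n.2.

Definition nform_mul (b : bool) (n : nform) : nform :=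
  let m := (if b then reduced_mulX else reduced_mulY) n.2 in ((n.1 + m.1)%N, m.2).

Definition XY_word (b : bool) : bword := if b then wX else wY.

Lemma nform_mulP b n :
  braid_eq (XY_word b ++ nform_word n) (nform_word (nform_mul b n)).
Proof.
case: n => k r; rewrite /nform_word /nform_mul Zpow_add catA -Zpow_central -catA.
by case: b; rewrite -catA; [rewrite -reduced_mulXP | rewrite -reduced_mulYP].
Qed.

Lemma nform_mul_seqP bs n : braid_eq (flatten (map XY_word bs) ++ nform_word n)
  (nform_word (foldr nform_mul n bs)).
Proof.
elim: bs => [|b bs IH]; first exact: beq_refl.
by rewrite /= -catA IH nform_mulP.
Qed.

(* Z s1 = Y^2 X, Z s2 = X Y^2, Z s1^-1 = X Y and Z s2^-1 = Y X; as Z is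
   central, Z^|w| w is a positive word in X and Y. *)
Definition letter_XY (x : letter) : seq bool :=
  match x with
  | (false, false) => [:: false; false; true]
  | (true, false) => [:: true; false; false]
  | (false, true) => [:: true; false]
  | (true, true) => [:: false; true]
  end.

Lemma wZ_letter x : braid_eq (wZ ++ [:: x]) (flatten (map XY_word (letter_XY x))).
Proof.
case: x => [[] []]; last by rewrite wZ_wYYY; apply: beq_refl.
- rewrite -[wZ ++ _]/(wX ++ [:: s1; s2; s1] ++ [:: s2i]) beq_braid.
  rewrite -[wX ++ _]/((wX ++ [:: s2; s1]) ++ [:: s2; s2i]) beq_free.
  by rewrite cats0; apply: beq_refl.
- exact: beq_refl.
- rewrite -[wZ ++ _]/((wX ++ wY) ++ [:: s1; s1i]) beq_free.
  by rewrite cats0; apply: beq_refl.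
Qed.

Definition normal_form (w : bword) : nform :=
  foldr (fun x n => foldr nform_mul n (letter_XY x)) (0%N, reduced1) w.

Lemma normal_formP w : braid_eq (Zpow (size w) ++ w) (nform_word (normal_form w)).
Proof.
elim: w => [|x w IH]; first exact: beq_refl.
rewrite -[Zpow _ ++ _]/(wZ ++ Zpow (size w) ++ ([:: x] ++ w)).
rewrite (catA (Zpow _)) (Zpow_central _ [:: x]) -catA catA wZ_letter IH.
exact: nform_mul_seqP.
Qed.

(** * The Burau representation with polynomial entries *)

(* The images at t = -q of s1, s2, s1^-1, s2^-1, the last two multiplied by q;
   at q = 1 they are R, L^-1, R^-1, L. *)
Definition pburau_letter (R : nzRingType) (q : R) (x : letter) : 'M[R]_2 :=
  match x with
  | (false, false) => m2 q 1 0 1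
  | (true, false) => m2 1 0 (-q) q
  | (false, true) => m2 1 (-1) 0 q
  | (true, true) => m2 q 0 q 1
  end.

Definition pburau (R : nzRingType) (q : R) : bword -> 'M[R]_2 :=
  word_mx (pburau_letter q).

Notation zburau := (pburau (1 : int)).

Lemma pburau_cat (R : nzRingType) (q : R) u v :
  pburau q (u ++ v) = pburau q u *m pburau q v.
Proof. exact: word_mx_cat. Qed.

Definition ninv (w : bword) : nat := count (fun x : letter => x.2) w.

Lemma pburau1 (R : nzRingType) (q : R) x : pburau q [:: x] = pburau_letter q x.
Proof. exact: word_mx1. Qed.

Lemma map_pburau (R S : nzRingType) (g : {rmorphism R -> S}) (q : R) w :
  map_mx g (pburau q w) = pburau (g q) w.
Proof.
apply: map_word_mx => x.
by case: x => [[] []]; rewrite /= map_m2 ?rmorphN ?rmorph1 ?rmorph0.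
Qed.

Lemma pburau_letter_inv (R : comNzRingType) (q : R) x :
  pburau_letter q x *m pburau_letter q (letter_inv x) = q *: 1%:M.
Proof. by case: x => [[] []]; rewrite /= m2_mul m2_1 m2_scale; congr m2; ring. Qed.

Lemma pburau_braid (R : comNzRingType) (q : R) :
  pburau_letter q s1 *m pburau_letter q s2 *m pburau_letter q s1 =
  pburau_letter q s2 *m pburau_letter q s1 *m pburau_letter q s2.
Proof. by rewrite /= !m2_mul; congr m2; ring. Qed.

Lemma zburau_braid_eq u v : braid_eq u v -> zburau u = zburau v.
Proof.
apply: (word_mx_braid_eq _ (pburau_braid (1 : int))) => x.
by rewrite pburau_letter_inv scale1r.
Qed.

Lemma det_zburau w : \det (zburau w) = 1.
Proof.
elim: w => [|x w IH]; first exact: det1.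
rewrite /= det_mulmx -/(pburau 1 w) IH mulr1 det_mx2.
by case: x => [[] []]; rewrite /= !m2E00 !m2E01 !m2E10 !m2E11; ring.
Qed.

Lemma burau_wordE (F : fieldType) (t : F) : burau_word t = word_mx (burau_letter t).
Proof. by []. Qed.

Lemma burau_cat (F : fieldType) (t : F) u v :
  burau_word t (u ++ v) = burau_word t u *m burau_word t v.
Proof. exact: word_mx_cat. Qed.

Lemma burau1 (F : fieldType) (t : F) x : burau_word t [:: x] = burau_letter t x.
Proof. exact: word_mx1. Qed.

Lemma burau_letterE (F : fieldType) (q : F) x : q != 0 ->
  burau_letter (-q) x = (q ^+ x.2)^-1 *: pburau_letter q x.
Proof.
move=> q0; rewrite /burau_letter /burau_s1 /burau_s2 -!/(m2 _ _ _ _) opprK.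
case: x => [[] []] /=; rewrite ?expr0 ?invr1 ?scale1r //; apply: invmx_right.
all: by rewrite m2_scale m2_mul m2_1; congr m2; field.
Qed.

Lemma burau_pburau (F : fieldType) (q : F) w : q != 0 ->
  burau_word (-q) w = (q ^+ ninv w)^-1 *: pburau q w.
Proof.
move=> q0; elim: w => [|x w IH]; first by rewrite /= expr0 invr1 scale1r.
rewrite /= IH burau_letterE // -scalemxAl -scalemxAr scalerA.
by rewrite exprD invfM mulrC.
Qed.

Lemma burau_letter_inv (F : fieldType) (t : F) x : t != 0 ->
  burau_letter t x *m burau_letter t (letter_inv x) = 1%:M.
Proof.
move=> t0; have q0 : - t != 0 by rewrite oppr_eq0.
rewrite -[t]opprK !burau_letterE // -scalemxAl -scalemxAr pburau_letter_inv.
by case: x => [? []]; rewrite /= expr0 expr1 invr1 !scalerA ?mulr1 ?mul1r mulVf // scale1r.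
Qed.

Lemma burau_braid (F : fieldType) (t : F) :
  burau_letter t s1 *m burau_letter t s2 *m burau_letter t s1 =
  burau_letter t s2 *m burau_letter t s1 *m burau_letter t s2.
Proof. by rewrite /= /burau_s1 /burau_s2 -!/(m2 _ _ _ _) !m2_mul; congr m2; ring. Qed.

Lemma burau_braid_eq (F : fieldType) (t : F) u v : t != 0 ->
  braid_eq u v -> burau_word t u = burau_word t v.
Proof.
move=> t0; apply: (word_mx_braid_eq _ (burau_braid t)) => x.
exact: burau_letter_inv.
Qed.

Lemma burau_inv_word (F : fieldType) (t : F) w : t != 0 ->
  burau_word t (inv_word w) = invmx (burau_word t w).
Proof.
move=> t0; apply/esym/invmx_right; rewrite !burau_wordE.
apply: (word_mx_inv_word _ (burau_braid t)) => x; exact: burau_letter_inv.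
Qed.

(** * q-rationals as entries of the Burau matrices *)

Definition letter_pow (x : letter) (a : int) : bword :=
  match a with Posz n => nseq n x | Negz n => nseq n.+1 (letter_inv x) end.

Definition RL_word (s : seq (int * int)) : bword :=
  flatten [seq letter_pow s1 p.1 ++ letter_pow s2i p.2 | p <- s].

Definition letter_exps (x : letter) : int * int :=
  match x with
  | (false, false) => (1, 0)
  | (true, false) => (0, -1)
  | (false, true) => (-1, 0)
  | (true, true) => (0, 1)
  end.

Lemma RL_word_letter_exps w : RL_word (map letter_exps w) = w.
Proof. by elim: w => [|[[] []] w IH] //; rewrite /RL_word /= -/(RL_word _) IH. Qed.

Lemma zpow_zburau x a :
  zpow (pburau_letter 1 x) (pburau_letter 1 (letter_inv x)) a =
  zburau (letter_pow x a).
Proof. by case: a => n; rewrite /pburau word_mx_nseq. Qed.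

Lemma Mz_zburau s : Mz s = zburau (RL_word s).
Proof.
elim: s => [|p s IH] //=.
by rewrite !pburau_cat -IH -!zpow_zburau.
Qed.

Section QRationalBurau.
Variable C : fieldType.
Local Notation "x %:F" := (@FracField.tofrac {poly C} x).

Lemma qF_neq0 : qF C != 0.
Proof. by rewrite tofrac_eq0 polyX_eq0. Qed.

Lemma mxpowz_burau x a : mxpowz (burau_letter (- qF C) x) a =
  burau_word (- qF C) (letter_pow x a).
Proof.
have t0 : - qF C != 0 by rewrite oppr_eq0 qF_neq0.
case: a => n; rewrite burau_wordE word_mx_nseq //=.
by rewrite invmxX (invmx_right (burau_letter_inv x t0)).
Qed.

Lemma Mq_burau s : Mq C s = burau_word (- qF C) (RL_word s).
Proof.
have Rq_s1 : Rq C = burau_letter (- qF C) s1.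
  by rewrite /burau_letter /= /burau_s1 opprK.
have Lq_s2i : Lq C = burau_letter (- qF C) s2i.
  rewrite burau_letterE ?qF_neq0 //= expr1 m2_scale mulVf ?qF_neq0 //.
  by rewrite mulr0 mulr1.
elim: s => [|p s IH] //=.
by rewrite !burau_cat -IH Rq_s1 Lq_s2i !mxpowz_burau.
Qed.

Lemma Mq_ratio s : let P := pburau ('X : {poly C}) (RL_word s) in
  Mq C s 0 0 / Mq C s 1 0 = (P 0 0)%:F / (P 1 0)%:F.
Proof.
have tofrac_pburau := map_pburau (@tofrac {poly C}) 'X (RL_word s).
rewrite /= Mq_burau burau_pburau ?qF_neq0 // -tofrac_pburau !mxE.
set k := (_ ^+ _)^-1; have k0 : k != 0 by rewrite invr_eq0 expf_neq0 ?qF_neq0.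
by rewrite invfM mulrACA divff // mul1r.
Qed.

Lemma pole_of_root (p d : {poly C}) (q0 : C) : d != 0 ->
  p.[q0] != 0 -> d.[q0] = 0 -> is_pole (p%:F / d%:F) q0.
Proof.
move=> d0 pq0 dq0 [p' [d' [d'q0 E]]].
have d'0 : d' != 0 by apply: contraNneq d'q0 => ->; rewrite horner0.
have cross : p * d' = p' * d.
  apply/eqP; rewrite -tofrac_eq -subr_eq0 !rmorphM /=.
  move: E => /(congr1 (fun f => f * d%:F * d'%:F)).
  rewrite divfK ?tofrac_eq0 // -mulrA (mulrC d%:F) mulrA divfK ?tofrac_eq0 //.
  by move=> ->; rewrite subrr.
move/(congr1 (horner^~ q0))/eqP: cross.
by rewrite !hornerM dq0 mulr0 mulf_eq0 (negbTE pq0) (negbTE d'q0).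
Qed.

End QRationalBurau.

(** * Reduced words act nontrivially on SL(2, Z) *)

Lemma zburau_wX : zburau wX = m2 0 1 (-1) 0.
Proof. by rewrite /pburau /wX /= m2_1 !m2_mul; congr m2; ring. Qed.

Lemma zburau_wY : zburau wY = m2 0 1 (-1) 1.
Proof. by rewrite /pburau /wY /= m2_1 !m2_mul; congr m2; ring. Qed.

Lemma zburau_wYe e : zburau (wYe e) = if e then m2 (-1) 1 (-1) 0 else m2 0 1 (-1) 1.
Proof.
case: e; rewrite /wYe ?zburau_wY //.
by rewrite pburau_cat zburau_wY m2_mul; congr m2; ring.
Qed.

Lemma zburau_block e :
  zburau (block e) = if e then m2 (-1) (-1) 0 (-1) else m2 (-1) 0 (-1) (-1).
Proof.
rewrite pburau_cat zburau_wYe zburau_wX.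
by case: e; rewrite m2_mul; congr m2; ring.
Qed.

(* Ping-pong: up to sign, a nonempty product of blocks has a positive diagonal
   and nonnegative, not both zero, off-diagonal entries. *)
Lemma zburau_blocks bs : exists (sg a b c d : int),
  [/\ sg = 1 \/ sg = -1, 1 <= a, 1 <= d, 0 <= b & 0 <= c] /\
  (if bs is [::] then [/\ sg = 1, a = 1, b = 0, c = 0 & d = 1] else 1 <= b + c) /\
  zburau (flatten (map block bs)) = m2 (sg * a) (sg * b) (sg * c) (sg * d).
Proof.
elim: bs => [|e bs [sg [a [b [c [d [[Hsg Ha Hd Hb Hc] [_ E]]]]]]]].
  by exists 1, 1, 0, 0, 1; rewrite /pburau /= m2_1 !mulr1 !mulr0; split; [split; [left|..]|].
have sgN : - sg = 1 \/ - sg = -1 by case: Hsg => ->; [right | left].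
have -> : flatten (map block (e :: bs)) = block e ++ flatten (map block bs) by [].
rewrite pburau_cat E zburau_block; case: e.
- exists (- sg), (a + c), (b + d), c, d; do !split=> //; try lia.
  by rewrite m2_mul; congr m2; ring.
- exists (- sg), a, b, (a + c), (b + d); do !split=> //; try lia.
  by rewrite m2_mul; congr m2; ring.
Qed.

Lemma zburau_reduced_word r : zburau (reduced_word r) =
  (if r.1.1 then zburau wX else 1%:M) *m zburau (flatten (map block r.1.2)) *m
  (if r.2 is Some e then zburau (wYe e) else 1%:M).
Proof.
case: r => [[a bs] tl]; rewrite /reduced_word !pburau_cat mulmxA.
by case: a; case: tl => [e|] /=; rewrite ?mul1mx ?mulmx1.
Qed.

Lemma zburau_reduced_neq_pm1 r sg : r <> reduced1 -> sg = 1 \/ sg = -1 ->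
  zburau (reduced_word r) <> m2 sg 0 0 sg.
Proof.
case: r => [[al bs] tl] Hr Hsg0; rewrite zburau_reduced_word /=.
have [sg' [a [b [c [d [[Hsg Ha Hd Hb Hc] [Hbs ->]]]]]]] := zburau_blocks bs.
case: bs Hbs Hr => [|e bs] Hbs Hr.
  have [-> -> -> -> ->] := Hbs.
  case: al Hr; case: tl => [[]|] Hr; rewrite ?zburau_wYe ?zburau_wX /=;
    try (by exfalso; apply: Hr);
    rewrite ?m2_1 ?m2_mul => /m2_inj [E1 E2 E3 E4];
    case: Hsg0 => Hs; rewrite Hs in E1 E2 E3 E4; lia.
clear Hr; case: al; case: tl => [[]|]; rewrite ?zburau_wYe ?zburau_wX /=;
  rewrite ?m2_1 ?m2_mul => /m2_inj [E1 E2 E3 E4];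
  case: Hsg0 => Hs; case: Hsg => Hs'; rewrite Hs Hs' in E1 E2 E3 E4; lia.
Qed.

Lemma sl2_upper_pm1 (M : 'M[int]_2) : \det M = 1 -> M 1 0 = 0 ->
  exists2 sg, sg = 1 \/ sg = -1 & M = m2 sg (M 0 1) 0 sg.
Proof.
rewrite det_mx2 => detM M10; rewrite M10 mulr0 subr0 in detM.
have /orP[/eqP M11 | /eqP M11] := intUnitRing.unitzPl detM.
- have M00 : M 0 0 = 1 by rewrite M11 mulr1 in detM.
  by exists 1; [left | rewrite [LHS]m2_eta M10 M00 M11].
- have M00 : M 0 0 = -1 by rewrite M11 mulrN1 in detM; rewrite -detM opprK.
  by exists (-1); [right | rewrite [LHS]m2_eta M10 M00 M11].
Qed.

Lemma sl2_conj_s2 (M : 'M[int]_2) : \det M = 1 -> M 1 0 = 0 ->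
  M <> m2 1 0 0 1 -> M <> m2 (-1) 0 0 (-1) ->
  (pburau_letter 1 s2 *m M *m pburau_letter 1 s2i) 1 0 != 0.
Proof.
move=> detM M10 M1 Mm1; have [sg Hsg EM] := sl2_upper_pm1 detM M10.
have b0 : M 0 1 != 0.
  by apply: contraPneq (Hsg) => b0; case=> sgE; [apply: M1 | apply: Mm1]; rewrite EM b0 sgE.
by rewrite EM /= !m2_mul m2E10; apply: contra b0 => /eqP E; apply/eqP; lia.
Qed.

(** * Points of the singular set *)

Lemma pburau_s2i_pow (R : comNzRingType) (q : R) n : exists S,
  pburau_letter q s2i ^+ n = m2 (q ^+ n) 0 S 1 /\ (q - 1) * S = q ^+ n.+1 - q.
Proof.
elim: n => [|n [S [E HS]]].
  by exists 0; rewrite expr0 expr1 mulr0 subrr; split; first exact: m2_1.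
exists (q ^+ n.+1 + S); rewrite exprS -mulmxE E /= m2_mul mulrDr HS !exprS.
by split; [congr m2 | ]; ring.
Qed.

Section Singular.
Variable C : numFieldType.

Lemma horner_pburau (q0 : C) u i j : (pburau ('X : {poly C}) u i j).[q0] = pburau q0 u i j.
Proof.
have := map_pburau (horner_eval q0) 'X u; rewrite /= horner_evalE hornerX => <-.
by rewrite mxE horner_evalE.
Qed.

Lemma pburau1_intr u i j : pburau (1 : C) u i j = (zburau u i j)%:~R.
Proof. by have := map_pburau (intr : int -> C) 1 u; rewrite rmorph1 => <-; rewrite mxE. Qed.

Lemma burau_entry (q0 : C) u i j : q0 != 0 ->
  burau_word (- q0) u i j = (q0 ^+ ninv u)^-1 * pburau q0 u i j.
Proof. by move=> q0_0; rewrite burau_pburau // mxE. Qed.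

(* The witness is the q-rational whose matrix spells u: its denominator
   vanishes at q0 but not identically, as it is nonzero at q = 1. *)
Lemma singular_of_scalar (q0 c : C) u : q0 != 0 -> c != 0 ->
  burau_word (- q0) u = c *: 1%:M -> zburau u 1 0 != 0 -> singular_set q0.
Proof.
move=> q0_0 c0 rho_u z10; split=> //.
exists (map letter_exps u); rewrite Mz_zburau Mq_ratio RL_word_letter_exps.
split=> //; apply: pole_of_root.
- apply: contra_neq z10 => P10; apply/eqP.
  by rewrite -(eqr_int C) -pburau1_intr -horner_pburau P10 horner0.
- have := congr1 (fun M : 'M[C]_2 => M 0 0) rho_u.
  rewrite /= burau_entry // horner_pburau !mxE /= mulr1n => E.
  apply/eqP => P0; move: E; rewrite P0 mulr0 mulr1 => /esym/eqP.
  by rewrite (negbTE c0).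
- have := congr1 (fun M : 'M[C]_2 => M 1 0) rho_u.
  rewrite /= burau_entry // horner_pburau !mxE /= mulr0n mulr0 => /eqP.
  by rewrite mulf_eq0 invr_eq0 expf_eq0 (negbTE q0_0) andbF => /eqP.
Qed.

Lemma pole_burau_entry (q0 : C) s : q0 != 0 ->
  is_pole (Mq C s 0 0 / Mq C s 1 0) q0 -> burau_word (- q0) (RL_word s) 1 0 = 0.
Proof.
move=> q0_0 pole; rewrite burau_entry // -horner_pburau.
have [-> | d0] := eqVneq (pburau 'X (RL_word s) 1 0).[q0] 0; first by rewrite mulr0.
by case: pole; rewrite Mq_ratio; exists (pburau 'X (RL_word s) 0 0), (pburau 'X (RL_word s) 1 0).
Qed.

(* L_q^N is scalar at q0, while its lower left entry at q = 1 is N. *)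
Lemma singular_of_root (q0 : C) N : q0 != 1 -> (0 < N)%N -> q0 ^+ N = 1 ->
  singular_set q0.
Proof.
move=> q0_1 N0 q0N.
have q0_0 : q0 != 0 by apply: contra_eq_neq q0N => ->; rewrite expr0n eqn0Ngt N0 eq_sym oner_neq0.
apply: (@singular_of_scalar q0 1 (nseq N s2i) q0_0 (oner_neq0 _)).
  have [S [E HS]] := pburau_s2i_pow q0 N.
  have S0 : S = 0.
    move: HS; rewrite exprS q0N mulr1 subrr => /eqP.
    by rewrite mulf_eq0 subr_eq0 (negbTE q0_1) => /eqP.
  rewrite burau_pburau // /pburau word_mx_nseq E S0 q0N /ninv count_nseq mul1n q0N.
  by rewrite invr1 !scale1r m2_1.
rewrite /pburau word_mx_nseq.
suff -> : pburau_letter (1 : int) s2i ^+ N = m2 1 0 N%:Z 1 by rewrite m2E10; lia.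
elim: N {N0 q0N} => [|n IH]; first exact: m2_1.
by rewrite exprS -mulmxE IH /= m2_mul; congr m2; lia.
Qed.

End Singular.

(** * A kernel element from a vanishing lower left entry *)

Definition kernel_word (a b : bword) : bword :=
  a ++ a ++ inv_word b ++ inv_word a ++ b ++ b ++ inv_word a ++ inv_word b.

(* For affine maps A, B with the same linear part, A B^-1 is a translation and
   conjugation by A or by B rescales it by the same factor, so
   A (A B^-1) A^-1 = B (A B^-1) B^-1. *)
Lemma affine_kernel (F : fieldType) (l x y : F) : l != 0 ->
  let A := m2 l x 0 1 in let B := m2 l y 0 1 in
  A *m A *m invmx B *m invmx A *m B *m B *m invmx A *m invmx B = 1%:M.
Proof.
move=> l0 /=; rewrite !invmx_upper ?oner_neq0 // !m2_mul m2_1.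
by congr m2; field; rewrite oner_neq0 l0.
Qed.

Lemma burau_kernel_word (F : fieldType) (t : F) a b : t != 0 ->
  let A := burau_word t a in let B := burau_word t b in
  burau_word t (kernel_word a b) =
  A *m A *m invmx B *m invmx A *m B *m B *m invmx A *m invmx B.
Proof. by move=> t0; rewrite /kernel_word !burau_cat !burau_inv_word // !mulmxA. Qed.

Lemma burau_conj_s1 (F : fieldType) (t : F) u : t != 0 ->
  burau_word t u 1 0 = 0 ->
  exists x, burau_word t (u ++ [:: s1] ++ inv_word u) = m2 (- t) x 0 1.
Proof.
move=> t0 u10.
have /mulmx1_unit[unit_u _] : burau_word t u *m burau_word t (inv_word u) = 1%:M.
  by rewrite -burau_cat (burau_braid_eq t0 (braid_eq_cat_inv u)).
rewrite !burau_cat burau_inv_word // burau1.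
move: unit_u; rewrite [burau_word t u]m2_eta u10.
rewrite unitmxE det_mx2 !m2E00 !m2E01 !m2E10 !m2E11 mulr0 subr0 unitfE mulf_eq0 negb_or.
case/andP=> a0 d0; rewrite invmx_upper // /= /burau_s1 -/(m2 _ _ _ _) !m2_mul.
by eexists; congr m2; field; rewrite ?a0 ?d0.
Qed.

Lemma zburau_inv_word u : let M := zburau u in
  zburau (inv_word u) = m2 (M 1 1) (- M 0 1) (- M 1 0) (M 0 0).
Proof.
move=> M; have detM := det_zburau u; rewrite det_mx2 -/M in detM.
have adjM : m2 (M 1 1) (- M 0 1) (- M 1 0) (M 0 0) *m M = 1%:M.
  by rewrite [X in _ *m X]m2_eta m2_mul m2_1; congr m2; rewrite -?detM; ring.
have MMi : M *m zburau (inv_word u) = 1%:M.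
  by rewrite -pburau_cat (zburau_braid_eq (braid_eq_cat_inv u)).
by rewrite -[LHS]mul1mx -adjM -mulmxA MMi mulmx1.
Qed.

Lemma zburau_conj_s1 u : let a := zburau u 0 0 in let c := zburau u 1 0 in
  zburau (u ++ [:: s1] ++ inv_word u) =
  m2 (1 - a * c) (a ^+ 2) (- c ^+ 2) (1 + a * c).
Proof.
move=> a c; rewrite {}/a {}/c; have := det_zburau u.
rewrite !pburau_cat zburau_inv_word /pburau word_mx1 -/(zburau u) /=.
rewrite [zburau u]m2_eta det_mx2 !m2E00 !m2E01 !m2E10 !m2E11 !m2_mul.
move: (zburau u 0 0) (zburau u 0 1) (zburau u 1 0) (zburau u 1 1) => a b c d detM.
by congr m2; nia.
Qed.

Lemma zburau_kernel_word g (a c : int) :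
  zburau g = m2 (1 - a * c) (a ^+ 2) (- c ^+ 2) (1 + a * c) ->
  zburau (kernel_word g [:: s1]) 1 0 = 2 * c ^+ 4 + 4 * c ^+ 6.
Proof.
move=> G; rewrite /kernel_word !pburau_cat (zburau_inv_word g) G.
rewrite !m2E00 !m2E01 !m2E10 !m2E11 /pburau /inv_word /= !mulmx1 !m2_mul m2E10.
by ring.
Qed.

Lemma kernel_entry_neq0 (c : int) : c != 0 -> 2 * c ^+ 4 + 4 * c ^+ 6 != 0.
Proof.
move=> c0; have c2 : 0 < c ^+ 2 by rewrite exprn_even_gt0.
rewrite lt0r_neq0 // -[4%N]/(2 * 2)%N -[6%N]/(2 * 3)%N !exprM.
by rewrite addr_gt0 // mulr_gt0 // exprn_gt0.
Qed.

Lemma burau_kernel_of_singular (C : numFieldType) (t0 : C) : t0 != 0 ->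
  singular_set (- t0) -> exists w, burau_word t0 w = 1%:M /\ ~ braid_eq w [::].
Proof.
move=> t0_0 [_ [s [Mz10 pole]]].
have q0_0 : - t0 != 0 by rewrite oppr_eq0.
have := pole_burau_entry q0_0 pole; rewrite opprK => u10.
have [x gE] := burau_conj_s1 t0_0 u10.
exists (kernel_word (RL_word s ++ [:: s1] ++ inv_word (RL_word s)) [:: s1]); split.
  rewrite burau_kernel_word // gE burau1 /= /burau_s1 -/(m2 _ _ _ _).
  exact: affine_kernel.
move/zburau_braid_eq/(congr1 (fun M : 'M_2 => M 1 0)).
rewrite (zburau_kernel_word (zburau_conj_s1 _)) -[zburau [::]]/1%:M mxE => /eqP.
by rewrite (negbTE (kernel_entry_neq0 _)) // -Mz_zburau.
Qed.

Lemma burau_wZ (F : fieldType) (t : F) : burau_word t wZ = t ^+ 3 *: 1%:M.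
Proof.
rewrite /wZ /wX burau_wordE /= /burau_s1 /burau_s2 -!/(m2 _ _ _ _).
by rewrite m2_1 !m2_mul m2_scale; congr m2; ring.
Qed.

Lemma burau_Zpow (F : fieldType) (t : F) k :
  burau_word t (Zpow k) = (t ^+ 3) ^+ k *: 1%:M.
Proof.
elim: k => [|k IH]; first by rewrite expr0 scale1r.
rewrite -[Zpow k.+1]/(wZ ++ Zpow k) burau_cat IH burau_wZ.
by rewrite -scalemxAl mul1mx scalerA -exprS.
Qed.

(* Z^2 acts trivially at t = -1 but as 64 at t = 2. *)
Lemma burau_m1_not_faithful (C : numFieldType) : ~ burau_faithful (-1 : C).
Proof.
have Z2_1 : burau_word (-1 : C) (Zpow 2) = 1%:M.
  by rewrite burau_Zpow -exprM mulnC exprM sqrrN !expr1n scale1r.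
have two0 : (2 : C) != 0 by rewrite pnatr_eq0.
move=> /(_ _ Z2_1) /(burau_braid_eq two0).
rewrite burau_Zpow => /(congr1 (fun M : 'M[C]_2 => M 0 0)).
by rewrite !mxE /= mulr1 -exprM -natrX => /eqP; rewrite pnatr_eq1.
Qed.

Lemma scalar_lower_witness (F : fieldType) (t c : F) r : t != 0 -> r <> reduced1 ->
  burau_word t (reduced_word r) = c *: 1%:M ->
  exists2 u, zburau u 1 0 != 0 & burau_word t u = c *: 1%:M.
Proof.
move=> t0 r1 rho_r; have [M10 | M10] := eqVneq (zburau (reduced_word r) 1 0) 0;
  last by exists (reduced_word r).
exists ([:: s2] ++ reduced_word r ++ [:: s2i]).
  rewrite (pburau_cat _ [:: s2]) (pburau_cat _ (reduced_word r)) !pburau1 mulmxA.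
  apply: sl2_conj_s2 (det_zburau _) M10 _ _; apply: zburau_reduced_neq_pm1 r1 _.
  + by left.
  + by right.
rewrite (burau_cat _ [:: s2]) (burau_cat _ (reduced_word r)) rho_r !burau1.
by rewrite -scalemxAl mul1mx -scalemxAr (burau_letter_inv s2 t0).
Qed.

Lemma expf_eq_root (F : fieldType) (x : F) (k m : nat) : x != 0 ->
  x ^+ k = x ^+ m -> k != m -> exists2 d, (0 < d)%N & x ^+ d = 1.
Proof.
move=> x0 E km.
have root a b : x ^+ a = x ^+ b -> (a < b)%N -> x ^+ (b - a) = 1.
  move=> Eab ab; apply: (mulfI (expf_neq0 a x0)).
  by rewrite -exprD subnKC ?(ltnW ab) // mulr1.
case: (ltngtP k m) => [lt_km | lt_mk | eq_km]; last by rewrite eq_km eqxx in km.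
- by exists (m - k)%N; [rewrite subn_gt0 | exact: root].
- by exists (k - m)%N; [rewrite subn_gt0 | exact: root].
Qed.

Lemma burau_kernel_normal_form (F : fieldType) (t : F) w : t != 0 ->
  burau_word t w = 1%:M -> let: (k, r) := normal_form w in
  burau_word t (reduced_word r) = ((t ^+ 3) ^+ size w / (t ^+ 3) ^+ k) *: 1%:M.
Proof.
move=> t0 rho_w; have := burau_braid_eq t0 (normal_formP w).
case: (normal_form w) => k r; rewrite /nform_word /= !(burau_cat _ (Zpow _)).
rewrite rho_w !burau_Zpow mulmx1 -scalemxAl mul1mx => E.
by rewrite mulrC -scalerA E scalerA mulVf ?expf_neq0 // scale1r.
Qed.

Lemma burau_faithful_of_nonsingular (C : numFieldType) (t0 : C) : t0 != 0 ->
  ~ ext_singular_set (- t0) -> burau_faithful t0.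
Proof.
move=> t0_0 nonsing w rho_w; have q0_0 : - t0 != 0 by rewrite oppr_eq0.
have T0 : t0 ^+ 3 != 0 by rewrite expf_neq0.
have := burau_kernel_normal_form t0_0 rho_w; have := normal_formP w.
case: (normal_form w) => k r nf; set c := _ / _ => rho_r.
have [r_1 | /eqP r1] := eqVneq r reduced1; last first.
  have c0 : c != 0 by rewrite mulf_neq0 ?invr_eq0 ?expf_neq0.
  have [u z10 rho_u] := scalar_lower_witness t0_0 r1 rho_r.
  by case: nonsing; left; apply: (singular_of_scalar q0_0 c0 _ z10); rewrite opprK.
subst r; have /divr1_eq Tk : c = 1.
  by have := congr1 (fun M : 'M[C]_2 => M 0 0) rho_r; rewrite !mxE /= mulr1.
have [k_w | k_w] := eqVneq (size w) k.
  by move: nf; rewrite /nform_word -k_w => /braid_eq_catl.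
have [d d0 Td] := expf_eq_root T0 Tk k_w.
have q0_1 : - t0 != 1 by apply/eqP => q0_1; apply: nonsing; right.
case: nonsing; left; apply: (@singular_of_root _ _ (2 * (3 * d)) q0_1).
  by rewrite !muln_gt0 d0.
by rewrite exprM sqrrN -exprM mulnC !exprM Td expr1n.
Qed.

Unset Implicit Arguments.

Theorem theorem1 (R : realType) (t0 : complex R) (ht0 : t0 != 0) :
  burau_faithful t0 <-> ~ ext_singular_set (- t0).
Proof.
split=> [faithful [singular | q0_1] | nonsing].
- have [w [rho_w w_nontriv]] := burau_kernel_of_singular ht0 singular.
  exact: w_nontriv (faithful w rho_w).
- by move: faithful; rewrite -[t0]opprK q0_1; exact: burau_m1_not_faithful.
- exact: burau_faithful_of_nonsingular.
Qed.
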